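(* Let $T$ be a tree. If $f(X)$ is a nonzero minor of $L(T,X)$ (the determinant of a square submatrix $L(T,X)[I,J]$ with $|I|=|J|\geq1$) whose leading coefficient is positive, then there exists a $2$-matching $\mathcal{M}$ of $T^\ell$ such that $f(X)=d(\mathcal{M},X)$.
   Context: A tree is a simple connected graph without cycles. $L(T,X)$ is the matrix indexed by $V(T)$ with diagonal entries $x_u$ and off-diagonal entry $-1$ for adjacent vertices and $0$ otherwise. Leading coefficients are taken with respect to the degree lexicographic monomial order. A $2$-matching of a graph (loops allowed) is a set $\mathcal{M}$ of edges such that every vertex is incident to at most two edges of $\mathcal{M}$ (a loop counts twice for incidence but as one edge). $T^\ell$ is $T$ with a loop added at each vertex. Components of $\mathcal{M}$ are single loops or paths of $T$; orient each path $w_1\cdots w_{m+1}$ (either direction), with heads $\{w_2,\dots,w_{m+1}\}$ and tails $\{w_1,\dots,w_m\}$, a loop $uu$ having head and tail $u$; $h(\mathcal{M})$, $t(\mathcal{M})$ are the unions of heads, resp. tails. $d(\mathcal{M},X)=\pm\det L(T,X)[h(\mathcal{M}),t(\mathcal{M})]$, the sign chosen so that the leading coefficient is positive. *)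

From mathcomp Require Import all_boot all_order all_algebra.
From mathcomp Require Import mpoly.
Set Implicit Arguments. Unset Strict Implicit. Unset Printing Implicit Defensive.
Import Order.TTheory GRing.Theory Num.Theory.
Local Open Scope ring_scope.

Definition is_tree (n : nat) (e : rel 'I_n) : Prop :=
  [/\ (forall u v : 'I_n, e u v = e v u), (forall u : 'I_n, ~~ e u u),
      (forall u v : 'I_n, connect e u v) &
      (forall s : seq 'I_n, uniq s -> (2 < size s)%N -> ~~ cycle e s)].

Definition Lmx (n : nat) (e : rel 'I_n) : 'M[{mpoly int[n]}]_n :=
  \matrix_(u, v) (if u == v then 'X_u else if e u v then -1 else 0).

Definition subm (n k : nat) (A : 'M[{mpoly int[n]}]_n) (r c : 'I_k -> 'I_n)
  : 'M[{mpoly int[n]}]_k := \matrix_(a, b) A (r a) (c b).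

Definition increasing (n k : nat) (r : 'I_k -> 'I_n) : Prop :=
  forall a b : 'I_k, (a < b)%N -> (r a < r b)%N.

Definition is_minor (n : nat) (e : rel 'I_n) (f : {mpoly int[n]}) : Prop :=
  exists (k : nat) (r c : 'I_k -> 'I_n),
    [/\ (0 < k)%N, increasing r, increasing c & f = \det (subm (Lmx e) r c)].

(* Edges of T^l are represented as sets: a loop uu is [set u], an edge uv of T
   is [set u; v]. *)
Definition two_matching (n : nat) (e : rel 'I_n) (M : {set {set 'I_n}}) : Prop :=
  (forall E, E \in M ->
     (exists u, E = [set u]) \/ (exists u v, e u v /\ E = [set u; v])) /\
  (forall w : 'I_n,
     (#|[set E in M | (w \in E) && (#|E| == 2)]| + 2 * ([set w] \in M) <= 2)%N).

Definition is_orientation (n : nat) (M : {set {set 'I_n}})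
    (D : {set 'I_n * 'I_n}) : Prop :=
  [/\ (forall u v, (u, v) \in D -> [set u; v] \in M),
      (forall E, E \in M -> exists u v, (u, v) \in D /\ E = [set u; v]),
      (forall u v, (u, v) \in D -> (v, u) \in D -> u = v),
      (forall u, (#|[set v | (u, v) \in D]| <= 1)%N) &
      (forall v, (#|[set u | (u, v) \in D]| <= 1)%N)].

Definition heads (n : nat) (D : {set 'I_n * 'I_n}) : {set 'I_n} :=
  [set v | [exists u, (u, v) \in D]].
Definition tails (n : nat) (D : {set 'I_n * 'I_n}) : {set 'I_n} :=
  [set u | [exists v, (u, v) \in D]].

(* f = d(M,X) for the orientation D: f = +- det L[h(M), t(M)], with the sign
   such that the leading coefficient (degree-lexicographic order, mleadc) is
   positive. *)
Definition is_d (n : nat) (e : rel 'I_n) (D : {set 'I_n * 'I_n})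
    (f : {mpoly int[n]}) : Prop :=
  exists (k : nat) (r c : 'I_k -> 'I_n),
    [/\ increasing r, increasing c,
        (forall u, (u \in heads D) = (u \in codom r)),
        (forall u, (u \in tails D) = (u \in codom c)) &
        [/\ f = \det (subm (Lmx e) r c) \/ f = - \det (subm (Lmx e) r c)
          & 0 < mleadc f]].

(* A nonzero minor det L[I, J] has a nonzero term in its permutation expansion,
   whose entries pair every column vertex with an equal or adjacent row vertex.
   These arcs column -> row, with each pair of opposite arcs replaced by two
   loops, orient a 2-matching M of T^l with heads I and tails J.
   Conversely, for any orientation of a 2-matching, det L[h, t] is, up to sign,
   the principal minor on the looped vertices. Expand along the column of the
   initial tail u of a path, whose successor is v: for any other neighbour x of
   u the remaining minor vanishes, because its rows outside the component of x
   in T - u meet only columns outside that component, and there are fewer of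
   those. Deleting the arc u -> v and inducting, all orientations of M give the
   same minor up to sign, namely f. *)

From mathcomp Require Import all_boot all_order all_algebra.
From mathcomp Require Import perm zify mpoly.
Set Implicit Arguments. Unset Strict Implicit. Unset Printing Implicit Defensive.
Import Order.TTheory GRing.Theory Num.Theory.
Local Open Scope ring_scope.

Definition eqpm (R : zmodType) (x y : R) := x = y \/ x = - y.

Lemma eqpm_refl (R : zmodType) (x : R) : eqpm x x.
Proof. by left. Qed.

Lemma eqpm_sym (R : zmodType) (x y : R) : eqpm x y -> eqpm y x.
Proof. by case=> ->; [left | right; rewrite opprK]. Qed.

Lemma eqpm_trans (R : zmodType) (x y z : R) : eqpm x y -> eqpm y z -> eqpm x z.
Proof. by case=> -> [] ->; rewrite ?opprK; [left | right | right | left]. Qed.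

Lemma eqpmNr (R : zmodType) (x y : R) : eqpm x y -> eqpm x (- y).
Proof. by case=> ->; [right | left]; rewrite ?opprK. Qed.

Lemma eqpm_signl (R : pzRingType) (m : nat) (x y : R) :
  eqpm x y -> eqpm ((-1) ^+ m * x) y.
Proof.
move=> xy; elim: m => [|m IHm]; first by rewrite expr0 mul1r.
by rewrite exprS -mulrA mulN1r; apply/eqpm_sym/eqpmNr/eqpm_sym.
Qed.

Section Enumerations.
Variable n : nat.

Definition enumerates k (r : 'I_k -> 'I_n) (A : {set 'I_n}) :=
  injective r /\ codom r =i A.

Lemma card_enumerates k (r : 'I_k -> 'I_n) A : enumerates r A -> #|A| = k.
Proof.
by case=> r_inj rA; rewrite -(eq_card rA) card_codom // card_ord.
Qed.

Lemma enumerates_perm k (r r' : 'I_k -> 'I_n) A :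
  enumerates r A -> enumerates r' A -> exists s : 'S_k, forall a, r' a = r (s a).
Proof.
move=> [r_inj rA] [r'_inj r'A].
have r_onto a : exists b, r b == r' a.
  have : r' a \in codom r by rewrite rA -r'A codom_f.
  by case/codomP => b ->; exists b.
pose g a := xchoose (r_onto a).
have rg a : r (g a) = r' a by apply/eqP; exact: (xchooseP (r_onto a)).
have g_inj : injective g by move=> a b gab; apply: r'_inj; rewrite -!rg gab.
by exists (perm g_inj) => a; rewrite permE rg.
Qed.

Lemma enumerates_lift k (r : 'I_k.+1 -> 'I_n) A i :
  enumerates r A -> enumerates (r \o lift i) (A :\ r i).
Proof.
move=> [r_inj rA]; split; first exact: inj_comp r_inj (lift_inj (h := i)).
move=> x; rewrite !inE -rA; apply/codomP/andP => [[a ->] | [xri /codomP [b xb]]].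
  split; last exact: codom_f.
  by apply/eqP => /r_inj ia; move: (neq_lift i a); rewrite ia eqxx.
have ib : i != b by apply/eqP => ib; rewrite xb ib eqxx in xri.
by have [a bE _] := unlift_some ib; exists a; rewrite /= xb bE.
Qed.

Lemma card_preim_enumerates k (r : 'I_k -> 'I_n) A (C : {set 'I_n}) :
  enumerates r A -> #|[set a | r a \in C]| = #|C :&: A|.
Proof.
move=> [r_inj rA]; rewrite -(card_imset _ r_inj); apply: eq_card => x.
rewrite inE; apply/imsetP/andP => [[a] | [xC]].
  by rewrite inE => aC ->; rewrite -rA codom_f.
by rewrite -rA => /codomP [a xa]; exists a; rewrite // inE -xa.
Qed.

Lemma increasing_inj k (r : 'I_k -> 'I_n) : increasing r -> injective r.
Proof.
move=> r_incr a b rab; apply/eqP; case: (ltngtP a b) => // ab.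
- by have := r_incr _ _ ab; rewrite rab ltnn.
- by have := r_incr _ _ ab; rewrite rab ltnn.
- exact/eqP/val_inj.
Qed.

Lemma increasing_enumeration (A : {set 'I_n}) :
  exists k (r : 'I_k -> 'I_n), increasing r /\ enumerates r A.
Proof.
have enumA_sorted : sorted (relpre (@nat_of_ord n) ltn) (enum A).
  rewrite /enum_mem -enumT; apply: sorted_filter.
    by move=> a b c /= h1 h2; apply: ltn_trans h1 h2.
  by rewrite -sorted_map val_enum_ord iota_ltn_sorted.
exists #|A|, (@enum_val _ (mem A)); split; last first.
  split; first exact: enum_val_inj.
  move=> x; apply/codomP/idP => [[i ->] | xA]; first exact: enum_valP.
  by exists (enum_rank_in xA x); rewrite enum_rankK_in.
move=> a b ab; case: n A enumA_sorted a b ab => [|m] A enumA_sorted a b ab.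
  by case: (enum_val a).
have sizeA : size (enum A) = #|A| by rewrite cardE.
rewrite !(enum_val_nth ord0) -!(nth_map ord0 0%N) ?sizeA //.
by apply: (sorted_ltn_nth ltn_trans 0%N); rewrite ?sorted_map ?inE ?size_map ?sizeA.
Qed.

End Enumerations.

Section Minors.
Variable n : nat.
Implicit Type A : 'M[{mpoly int[n]}]_n.

Lemma det_subm_eqpm A k k' (r c : 'I_k -> 'I_n) (r' c' : 'I_k' -> 'I_n) P Q :
  enumerates r P -> enumerates c Q -> enumerates r' P -> enumerates c' Q ->
  eqpm (\det (subm A r c)) (\det (subm A r' c')).
Proof.
move=> rP cQ r'P c'Q.
have kk' : k = k' by rewrite -(card_enumerates rP) (card_enumerates r'P).
subst k'.
have [s rs] := enumerates_perm rP r'P.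
have [t ct] := enumerates_perm cQ c'Q.
have -> : subm A r' c' = row_perm s (col_perm t (subm A r c)).
  by apply/matrixP => a b; rewrite !mxE rs ct.
rewrite row_permE col_permE !det_mulmx !det_perm.
by apply/eqpm_sym/eqpm_signl; rewrite mulrC; apply/eqpm_signl/eqpm_refl.
Qed.

Lemma row'_col'_subm A k (r c : 'I_k.+1 -> 'I_n) i j :
  row' i (col' j (subm A r c)) = subm A (r \o lift i) (c \o lift j).
Proof. by apply/matrixP => a b; rewrite !mxE. Qed.

End Minors.

Lemma det_eq0_rows_on (R : comNzRingType) k (B : 'M[R]_k) (S C : {set 'I_k}) :
  (#|C| < #|S|)%N -> (forall i j, i \in S -> j \notin C -> B i j = 0) ->
  \det B = 0.
Proof.
move=> CS B0; rewrite /determinant; apply: big1 => s _.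
have [/existsP [i /andP [iS siC]] | /existsPn sSC] :=
  boolP [exists i, (i \in S) && (s i \notin C)].
  by rewrite (bigD1 i) //= B0 // mul0r mulr0.
have : s @: S \subset C.
  by apply/subsetP => _ /imsetP [i iS ->]; move: (sSC i); rewrite iS negbK.
by move/subset_leq_card; rewrite card_imset; [rewrite leqNgt CS | exact: perm_inj].
Qed.

Lemma det_neq0_perm (R : comNzRingType) k (B : 'M[R]_k) :
  \det B != 0 -> exists s : 'S_k, forall i, B i (s i) != 0.
Proof.
have [/existsP [s /forallP Bs] | /existsPn noPerm] :=
  boolP [exists s : 'S_k, [forall i, B i (s i) != 0]].
  by exists s.
rewrite /determinant big1 ?eqxx // => s _.
have /forallPn [i] := noPerm s; rewrite negbK => /eqP Bsi.
by rewrite (bigD1 i) //= Bsi mul0r mulr0.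
Qed.

Lemma set2_eq1 (T : finType) (a b w : T) : [set a; b] = [set w] -> a = w /\ b = w.
Proof.
move=> abw; have : a \in [set w] by rewrite -abw set21.
have : b \in [set w] by rewrite -abw set22.
by rewrite !inE => /eqP -> /eqP ->.
Qed.

Definition oriented_2matching (n : nat) (e : rel 'I_n) (D : {set 'I_n * 'I_n}) :=
  [/\ forall x y, (x, y) \in D -> x = y \/ e x y,
      forall x y, (x, y) \in D -> (y, x) \in D -> x = y,
      forall x y z, (x, y) \in D -> (x, z) \in D -> y = z &
      forall x y z, (x, z) \in D -> (y, z) \in D -> x = y].

Definition loops (n : nat) (D : {set 'I_n * 'I_n}) := [set x | (x, x) \in D].

Definition undirected (n : nat) (D : {set 'I_n * 'I_n}) : {set {set 'I_n}} :=
  [set [set p.1; p.2] | p in D].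

Lemma mem_heads (n : nat) (D : {set 'I_n * 'I_n}) x y : (x, y) \in D -> y \in heads D.
Proof. by move=> xy; rewrite inE; apply/existsP; exists x. Qed.

Lemma mem_tails (n : nat) (D : {set 'I_n * 'I_n}) x y : (x, y) \in D -> x \in tails D.
Proof. by move=> xy; rewrite inE; apply/existsP; exists y. Qed.

Section OrientedMatchings.
Variables (n : nat) (e : rel 'I_n).
Hypothesis e_sym : forall x y, e x y = e y x.
Local Notation oriented := (oriented_2matching e).
Implicit Types D : {set 'I_n * 'I_n}.

Lemma oriented_subset D D' : oriented D -> D' \subset D -> oriented D'.
Proof.
move=> [D_edge D_anti D_out D_in] /subsetP D'D.
by split=> [x y /D'D | x y /D'D + /D'D | x y z /D'D + /D'D | x y z /D'D + /D'D];
  [exact: D_edge | exact: D_anti | exact: D_out | exact: D_in].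
Qed.

Lemma card_heads_tails_closed D (C : {set 'I_n}) : oriented D ->
  (forall x y, (x, y) \in D -> (x \in C) = (y \in C)) ->
  #|C :&: heads D| = #|C :&: tails D|.
Proof.
move=> [_ _ D_out D_in] C_closed.
pose DC := [set p in D | p.2 \in C].
have -> : C :&: heads D = snd @: DC.
  apply/setP => y; rewrite !inE; apply/andP/imsetP => [[yC /existsP [x xy]] | [[x y'] ]].
    by exists (x, y); rewrite // !inE xy.
  by rewrite !inE /= => /andP [xy yC] ->; split => //; apply/existsP; exists x.
have -> : C :&: tails D = fst @: DC.
  apply/setP => x; rewrite !inE; apply/andP/imsetP => [[xC /existsP [y xy]] | [[x' y] ]].
    by exists (x, y); rewrite // !inE xy /= -(C_closed _ _ xy).
  rewrite !inE /= => /andP [xy yC] ->; split; first by rewrite (C_closed _ _ xy).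
  by apply/existsP; exists y.
rewrite !card_in_imset // => [[a b] [a' b'] | [a b] [a' b']];
  rewrite !inE /= => /andP [ab _] /andP [ab' _] /= eq_ab; subst.
- by rewrite (D_out _ _ _ ab ab').
- by rewrite (D_in _ _ _ ab ab').
Qed.

Lemma card_heads_tails D : oriented D -> #|heads D| = #|tails D|.
Proof.
move=> D_or; rewrite -[heads D]setTI -[tails D]setTI.
by apply: card_heads_tails_closed => // x y _; rewrite !inE.
Qed.

Lemma heads_delete_arc D u v : oriented D -> (u, v) \in D ->
  heads (D :\ (u, v)) = heads D :\ v.
Proof.
move=> [_ _ _ D_in] uv; apply/setP => z; rewrite !inE.
apply/existsP/andP => [[w] | [zv /existsP [w wz]]].
  rewrite !inE => /andP [wz_uv wz]; split; last by apply/existsP; exists w.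
  by apply: contraNneq wz_uv => zv; subst z; rewrite (D_in _ _ _ wz uv).
by exists w; rewrite !inE wz andbT; apply: contraNneq zv => -[_ ->].
Qed.

Lemma tails_delete_arc D u v : oriented D -> (u, v) \in D ->
  tails (D :\ (u, v)) = tails D :\ u.
Proof.
move=> [_ _ D_out _] uv; apply/setP => z; rewrite !inE.
apply/existsP/andP => [[w] | [zu /existsP [w zw]]].
  rewrite !inE => /andP [zw_uv zw]; split; last by apply/existsP; exists w.
  by apply: contraNneq zw_uv => zu; subst z; rewrite (D_out _ _ _ zw uv).
by exists w; rewrite !inE zw andbT; apply: contraNneq zu => -[-> _].
Qed.

Lemma source_arc_edge D u v : oriented D -> (u, v) \in D -> u \notin heads D -> e v u.
Proof.
move=> [D_edge _ _ _] uv uh; rewrite e_sym.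
have [u_v | //] := D_edge _ _ uv.
by rewrite -u_v in uv; move: uh; rewrite (mem_heads uv).
Qed.

Lemma loops_delete_arc D u v : u != v -> loops (D :\ (u, v)) = loops D.
Proof.
move=> uv; apply/setP => z; rewrite !inE andb_idl // => _.
by apply: contraNneq uv => -[<- <-].
Qed.

Lemma heads_tails_loops D : {in D, forall p, p.1 = p.2} ->
  heads D = loops D /\ tails D = loops D.
Proof.
move=> D_loops; split; apply/setP => z; rewrite !inE.
  apply/existsP/idP => [[w wz] | zz]; last by exists z.
  by rewrite -[X in (X, z)](D_loops _ wz).
apply/existsP/idP => [[w zw] | zz]; last by exists z.
by move: (D_loops _ zw) => /= zw_eq; rewrite {2}zw_eq.
Qed.

Lemma loop_in_undirected D w : ([set w] \in undirected D) = ((w, w) \in D).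
Proof.
apply/imsetP/idP => [[[a b] ab /esym /set2_eq1 [/= aw bw]] | ww].
  by rewrite aw bw in ab.
by exists (w, w); rewrite //= setUid.
Qed.

Lemma two_matching_undirected D : oriented D -> two_matching e (undirected D).
Proof.
move=> [D_edge _ D_out D_in]; split.
  move=> _ /imsetP [[x y] xy ->] /=.
  case: (D_edge _ _ xy) => [<- | exy]; last by right; exists x, y.
  by left; exists x; rewrite setUid.
move=> w; rewrite loop_in_undirected.
pose Out := [set y | (w, y) \in D]; pose In := [set x | (x, w) \in D].
have card_Out : (#|Out :\ w| + ((w, w) \in D) <= 1)%N.
  have -> : ((w, w) \in D) = (w \in Out) by rewrite inE.
  rewrite addnC -cardsD1; apply/card_le1_eqP => a b.
  by rewrite !inE => wa wb; exact: D_out wb wa.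
have card_In : (#|In :\ w| + ((w, w) \in D) <= 1)%N.
  have -> : ((w, w) \in D) = (w \in In) by rewrite inE.
  rewrite addnC -cardsD1; apply/card_le1_eqP => a b.
  by rewrite !inE => aw bw; exact: D_in bw aw.
have nonloops_sub : [set E in undirected D | (w \in E) && (#|E| == 2%N)] \subset
       [set [set w; y] | y in Out :\ w] :|: [set [set x; w] | x in In :\ w].
  apply/subsetP => E; rewrite !inE => /andP [/imsetP [[a b] ab ->] /=].
  rewrite cards2 eqSS eqb1 => /andP [/set2P [wa | wb] a_b]; subst w; apply/orP.
  - by left; apply/imsetP; exists b; rewrite // !inE ab eq_sym a_b.
  - by right; apply/imsetP; exists a; rewrite // !inE ab a_b.
have := leq_trans (subset_leq_card nonloops_sub) (leq_trans (leq_card_setU _ _)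
  (leq_add (leq_imset_card _ _) (leq_imset_card _ _))).
by case: ((w, w) \in D) card_Out card_In => /=; lia.
Qed.

Lemma orientation_undirected D : oriented D -> is_orientation (undirected D) D.
Proof.
move=> [_ D_anti D_out D_in]; split=> //.
- by move=> u v uv; apply/imsetP; exists (u, v).
- by move=> _ /imsetP [[u v] uv ->]; exists u, v.
- by move=> u; apply/card_le1_eqP => a b; rewrite !inE => ua ub; exact: D_out ub ua.
- by move=> v; apply/card_le1_eqP => a b; rewrite !inE => av bv; exact: D_in bv av.
Qed.

Lemma orientation_oriented D1 D : oriented D1 ->
  is_orientation (undirected D1) D -> oriented D.
Proof.
move=> [D1_edge _ _ _] [D_edges _ D_anti D_out D_in]; split=> //.
- move=> x y /D_edges /imsetP [[a b] ab /= xy_ab].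
  have /set2P xa : x \in [set a; b] by rewrite -xy_ab set21.
  have /set2P yb : y \in [set a; b] by rewrite -xy_ab set22.
  case: xa yb => -> [] ->; try by left.
    exact: D1_edge ab.
  by case: (D1_edge _ _ ab) => [-> | ba]; [left | right; rewrite e_sym].
- by move=> x y z xy xz; apply/(card_le1_eqP (D_out x)); rewrite inE.
- by move=> x y z xz yz; apply/(card_le1_eqP (D_in z)); rewrite inE.
Qed.

Lemma loops_orientation M D D' :
  is_orientation M D -> is_orientation M D' -> loops D = loops D'.
Proof.
have loops_sub (D1 D2 : {set 'I_n * 'I_n}) : is_orientation M D1 ->
    is_orientation M D2 -> loops D1 \subset loops D2.
  move=> [D1_edges _ _ _ _] [_ D2_arcs _ _ _]; apply/subsetP => x; rewrite !inE => xx.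
  have [a [b [ab /esym ab_x]]] := D2_arcs _ (D1_edges _ _ xx).
  by rewrite setUid in ab_x; case: (set2_eq1 ab_x) ab => -> ->.
by move=> DM D'M; apply/eqP; rewrite eqEsubset !loops_sub.
Qed.

(* Opposite arcs x -> y, y -> x become the loops x -> x, y -> y, with the same
   heads and tails. *)
Definition undigon D : {set 'I_n * 'I_n} :=
  [set p in D | (p.2, p.1) \notin D] :|: [set (p.1, p.1) | p in D & (p.2, p.1) \in D].

Lemma undigonP D x y : (x, y) \in undigon D ->
  (x, y) \in D /\ (y, x) \notin D \/ x = y /\ exists z, (x, z) \in D /\ (z, x) \in D.
Proof.
rewrite !inE => /orP [/andP [xy yx] | /imsetP [[a b]]]; first by left.
by rewrite !inE /= => /andP [ab ba] [-> ->]; right; split => //; exists b.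
Qed.

Section Undigon.
Variable D : {set 'I_n * 'I_n}.
Hypothesis D_edge : forall x y, (x, y) \in D -> x = y \/ e x y.
Hypothesis D_out : forall x y z, (x, y) \in D -> (x, z) \in D -> y = z.
Hypothesis D_in : forall x y z, (x, z) \in D -> (y, z) \in D -> x = y.

Lemma oriented_undigon : oriented (undigon D).
Proof.
split.
- by move=> x y /undigonP [[/D_edge] // | [-> _]]; left.
- move=> x y /undigonP [[xy yx] | [-> _] //] /undigonP [[yx' _] | [-> _] //].
  by rewrite yx' in yx.
- move=> x y z /undigonP [[xy yx] | [<- [w [xw wx]]]]
                /undigonP [[xz zx] | [<- [w' [xw' w'x]]]] //.
  + exact: D_out xy xz.
  + by move: yx; rewrite (D_out xy xw') w'x.
  + by move: zx; rewrite -(D_out xw xz) wx.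
- move=> x y z /undigonP [[xz zx] | [-> [w [zw wz]]]]
                /undigonP [[yz zy] | [-> [w' [zw' w'z]]]] //.
  + exact: D_in xz yz.
  + by move: zx; rewrite (D_in xz w'z) zw'.
  + by move: zy; rewrite -(D_in wz yz) zw.
Qed.

Lemma heads_undigon : heads (undigon D) = heads D.
Proof.
apply/setP => x; rewrite !inE; apply/existsP/existsP => [[w] | [w wx]].
  by case/undigonP => [[wx _] | [-> [z [_ zx]]]]; [exists w | exists z].
have [xw | xw] := boolP ((x, w) \in D).
  exists x; rewrite !inE; apply/orP; right.
  by apply/imsetP; exists (x, w); rewrite // !inE xw.
by exists w; rewrite !inE wx xw.
Qed.

Lemma tails_undigon : tails (undigon D) = tails D.
Proof.
apply/setP => x; rewrite !inE; apply/existsP/existsP => [[w] | [w xw]].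
  by case/undigonP => [[xw _] | [_ [z [xz _]]]]; [exists w | exists z].
have [wx | wx] := boolP ((w, x) \in D).
  exists x; rewrite !inE; apply/orP; right.
  by apply/imsetP; exists (x, w); rewrite // !inE xw.
by exists w; rewrite !inE xw wx.
Qed.

End Undigon.

Lemma minor_arcs k (r c : 'I_k -> 'I_n) : injective r -> injective c ->
  \det (subm (Lmx e) r c) != 0 ->
  exists D, [/\ oriented D, enumerates r (heads D) & enumerates c (tails D)].
Proof.
move=> r_inj c_inj /det_neq0_perm [s Ls].
pose D0 := [set (c (s a), r a) | a : 'I_k].
have D0P x y : (x, y) \in D0 -> exists a, x = c (s a) /\ y = r a.
  by case/imsetP => a _ [-> ->]; exists a.
have arc_D0 a : (c (s a), r a) \in D0 by apply: imset_f.
exists (undigon D0); rewrite heads_undigon tails_undigon; split.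
- apply: oriented_undigon.
  + move=> x y /D0P [a [-> ->]]; move: (Ls a); rewrite /subm /Lmx !mxE.
    case: (r a =P c (s a)) => [-> | _]; first by left.
    by case: ifP => [era _ | _]; [right; rewrite e_sym era | rewrite eqxx].
  + by move=> x y z /D0P [a [-> ->]] /D0P [b [/c_inj/perm_inj -> ->]].
  + by move=> x y z /D0P [a [-> ->]] /D0P [b [-> /r_inj ->]].
- split=> // x; apply/codomP/idP => [[a ->] | ]; first exact: mem_heads (arc_D0 a).
  by rewrite inE => /existsP [w /D0P [a [_ ->]]]; exists a.
- split=> // x; apply/codomP/idP => [[b ->] | ].
  by rewrite -[b](permKV s); exact: mem_tails (arc_D0 _).
  by rewrite inE => /existsP [w /D0P [a [-> _]]]; exists (s a).
Qed.

Lemma increasing_enumerations D : oriented D ->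
  exists k (r c : 'I_k -> 'I_n),
    [/\ increasing r, increasing c, enumerates r (heads D) & enumerates c (tails D)].
Proof.
move=> D_or.
have [k [r [r_incr rD]]] := increasing_enumeration (heads D).
have [k' [c [c_incr cD]]] := increasing_enumeration (tails D).
have kk' : k' = k.
  by rewrite -(card_enumerates rD) -(card_enumerates cD) (card_heads_tails D_or).
by subst k'; exists k, r, c.
Qed.

End OrientedMatchings.

Section Trees.
Variables (n : nat) (e : rel 'I_n).
Hypothesis e_sym : forall x y, e x y = e y x.
Hypothesis e_acyclic :
  forall s : seq 'I_n, uniq s -> (2 < size s)%N -> ~~ path.cycle e s.
Local Notation oriented := (oriented_2matching e).
Implicit Types D : {set 'I_n * 'I_n}.

Lemma no_backward_map (S : {set 'I_n}) (g : 'I_n -> 'I_n) x : injective g -> x \in S ->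
  ~ {in S, forall z, [/\ g z \in S, e (g z) z, g z != z & g (g z) != z]}.
Proof.
move=> g_inj xS gS.
have orbit_S : all (mem S) (orbit g x).
  apply/allP => _ /trajectP [i _ ->]; elim: i => //= i IHi.
  by case: (gS _ IHi).
have orbit_cycle : path.cycle e (orbit g x).
  apply: (sub_in_cycle (P := mem S) (e := frel g)) orbit_S (cycle_orbit g_inj x).
  by move=> a b aS _ /eqP <-; case: (gS _ aS) => _ + _ _; rewrite e_sym.
have [_ _ gx_x ggx_x] := gS _ xS.
have : uniq [:: x; g x; g (g x)].
  by rewrite /= !inE negb_or (inj_eq g_inj) ![x == _]eq_sym gx_x ggx_x.
move/uniq_leq_size => orbit_size.
have /(e_acyclic (orbit_uniq g x))/negP : (2 < size (orbit g x))%N.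
  by apply: orbit_size => z; rewrite !inE => /or3P [] /eqP ->;
    rewrite ?in_orbit ?mem_orbit.
by [].
Qed.

Lemma oriented_source_arc D x y : oriented D -> (x, y) \in D -> x != y ->
  exists u v, (u, v) \in D /\ u \notin heads D.
Proof.
move=> [D_edge D_anti D_out _] xy x_y.
pose S := [set z | [exists w, ((z, w) \in D) && (z != w)]].
have [/existsP [u /andP [uS uh]] | /existsPn S_heads] :=
  boolP [exists u, (u \in S) && (u \notin heads D)].
  by move: uS; rewrite inE => /existsP [v /andP [uv _]]; exists u, v.
(* Otherwise every tail of a non-loop arc has a predecessor, and following
   predecessors runs around a cycle of T. *)
have pred_ex z : z \in S -> exists w, ((w, z) \in D) && (w != z).
  move=> zS; have : z \in heads D by move: (S_heads z); rewrite zS negbK.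
  move: zS; rewrite !inE => /existsP [w0 /andP [zw0 z_w0]] /existsP [w wz].
  exists w; rewrite wz; apply: contra_neq z_w0 => wz_eq.
  by rewrite wz_eq in wz; exact: D_out wz zw0.
pose g z := if z \in S then odflt z [pick w | ((w, z) \in D) && (w != z)] else z.
have gS z : z \in S -> ((g z, z) \in D) && (g z != z).
  move=> zS; rewrite /g zS; case: pickP => [w // | no_pred].
  by have [w] := pred_ex _ zS; rewrite no_pred.
have gS_S z : z \in S -> g z \in S.
  by move=> /gS /andP [gz_z gz]; rewrite inE; apply/existsP; exists z; rewrite gz_z gz.
have g_out z : z \notin S -> g z = z by rewrite /g => /negbTE ->.
have g_inj : injective g.
  move=> a b; have [aS | aS] := boolP (a \in S); have [bS | bS] := boolP (b \in S).
  - by move=> gab; move: (gS _ aS) (gS _ bS) => /andP [ga _] /andP [gb _];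
      rewrite gab in ga; exact: D_out ga gb.
  - by rewrite (g_out _ bS) => gab; move: (gS_S _ aS); rewrite gab (negbTE bS).
  - by rewrite (g_out _ aS) => gab; move: (gS_S _ bS); rewrite -gab (negbTE aS).
  - by rewrite (g_out _ aS) (g_out _ bS).
have xS : x \in S by rewrite inE; apply/existsP; exists y; rewrite xy.
exfalso; apply: (no_backward_map g_inj xS) => z zS.
have /andP [gz_z gz] := gS _ zS; have /andP [ggz_gz _] := gS _ (gS_S _ zS).
split=> //; first exact: gS_S.
  by case: (D_edge _ _ gz_z) => // gz_eq; rewrite gz_eq eqxx in gz.
by apply: contra_neq gz => ggz_eq; rewrite ggz_eq in ggz_gz; exact: D_anti gz_z ggz_gz.
Qed.

(* C is the component of x in T - u. *)
Lemma tree_cut u x v : e x u -> e v u -> x != v -> x != u ->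
  exists C : {set 'I_n}, [/\ x \in C, u \notin C, v \notin C &
    forall w w', w \in C -> w' \notin C -> e w w' -> w' = u].
Proof.
move=> exu evu x_v x_u.
pose e' := [rel a b | [&& e a b, a != u & b != u]].
have avoid_u a p : a != u -> path e' a p -> all (predC1 u) (a :: p).
  elim: p a => [|b p IHp] a a_u /=; first by rewrite a_u.
  by case/andP => /and3P [_ _ b_u] bp; rewrite a_u; exact: IHp.
have C_u w : connect e' x w -> w != u.
  case/connectP => p xp ->.
  by have /allP := avoid_u _ _ x_u xp; apply; exact: mem_last.
exists [set w | connect e' x w]; split.
- by rewrite inE connect0.
- by rewrite inE; apply/negP => /C_u; rewrite eqxx.
- rewrite inE; apply/negP => /connectP [p xp vE].
  case/shortenP: xp vE => p' xp' p'_uniq _ vE.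
  have u_p' : u \notin x :: p'.
    by apply/negP => /(allP (avoid_u _ _ x_u xp')) /=; rewrite eqxx.
  have p'_nil : p' != [::] by apply: contra_neq x_v => p'0; rewrite vE p'0.
  have : uniq (u :: x :: p') by rewrite cons_uniq u_p' p'_uniq.
  move/e_acyclic => /(_ _)/negP; apply; first by case: p' p'_nil {xp' p'_uniq u_p' vE}.
  rewrite /path.cycle rcons_cons /= e_sym exu /= rcons_path -vE evu andbT.
  by apply: sub_path xp' => a b /and3P [].
- move=> w w'; rewrite !inE => Cw Cw' eww'; apply/eqP; apply: contraNT Cw' => w'_u.
  by apply: (connect_trans Cw); apply: connect1; rewrite /= eww' C_u.
Qed.

Lemma minor_neighbour_eq0 D u v k (r c : 'I_k.+1 -> 'I_n) i j :
  oriented D -> (u, v) \in D -> u \notin heads D ->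
  enumerates r (heads D) -> enumerates c (tails D) ->
  c j = u -> r i != v -> e (r i) u ->
  \det (subm (Lmx e) (r \o lift i) (c \o lift j)) = 0.
Proof.
move=> D_or uv uh rD cD cj ri_v eriu; have [D_edge _ D_out _] := D_or.
have ri_h : r i \in heads D by rewrite -rD.2 codom_f.
have ri_u : r i != u by apply: contraNneq uh => <-.
have evu := source_arc_edge e_sym D_or uv uh.
have [C [riC uC vC C_cut]] := tree_cut eriu evu ri_v ri_u.
have C_closed x y : (x, y) \in D -> (x \in C) = (y \in C).
  move=> xy; case: (D_edge _ _ xy) => [-> // | exy].
  case xC: (x \in C); case yC: (y \in C) => //.
    by move: uh; rewrite -(C_cut _ _ xC (negbT yC) exy) (mem_heads xy).
  rewrite e_sym in exy; have xu := C_cut _ _ yC (negbT xC) exy; subst x.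
  by move: vC; rewrite -(D_out _ _ _ xy uv) yC.
pose R : {set 'I_k} := [set a | r (lift i a) \in C].
pose K : {set 'I_k} := [set b | c (lift j b) \in C].
have card_KR : #|K| = #|R|.+1.
  rewrite (card_preim_enumerates _ (enumerates_lift i rD)).
  rewrite (card_preim_enumerates _ (enumerates_lift j cD)) cj !setIDA.
  have := cardsD1 u (C :&: tails D); have := cardsD1 (r i) (C :&: heads D).
  rewrite !in_setI (negbTE uC) riC ri_h (card_heads_tails_closed D_or C_closed) /=.
  by rewrite add0n add1n => heads_eq tails_eq; rewrite -tails_eq heads_eq.
apply: (det_eq0_rows_on (S := ~: R) (C := ~: K)).
  by have := cardsC R; have := cardsC K; rewrite card_ord; lia.
move=> a b; rewrite !inE negbK => aR bK; rewrite /subm /Lmx !mxE /=.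
case: eqP => [rc | _]; first by rewrite rc bK in aR.
case: ifP => // erc; have ru := C_cut _ _ bK aR (etrans (e_sym _ _) erc).
by move: uh; rewrite -ru -rD.2 codom_f.
Qed.

Lemma det_source_arc D u v k (r c : 'I_k.+1 -> 'I_n) :
  oriented D -> (u, v) \in D -> u \notin heads D ->
  enumerates r (heads D) -> enumerates c (tails D) ->
  exists i j, [/\ r i = v, c j = u &
    eqpm (\det (subm (Lmx e) r c)) (\det (subm (Lmx e) (r \o lift i) (c \o lift j)))].
Proof.
move=> D_or uv uh rD cD.
have /codomP [i vE] : v \in codom r by rewrite rD.2 (mem_heads uv).
have /codomP [j uE] : u \in codom c by rewrite cD.2 (mem_tails uv).
exists i, j; split => //.
have evu := source_arc_edge e_sym D_or uv uh.
have v_u : v != u by apply: contraNneq uh => <-; exact: mem_heads uv.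
rewrite (expand_det_col _ j) (bigD1 i) //= big1 ?addr0 => [|i' i'_i].
  rewrite /cofactor row'_col'_subm /subm /Lmx !mxE -vE -uE (negbTE v_u) evu mulN1r.
  by apply/eqpm_sym/eqpmNr/eqpm_sym/eqpm_signl/eqpm_refl.
rewrite /cofactor row'_col'_subm /subm /Lmx !mxE -uE.
have ri'_h : r i' \in heads D by rewrite -rD.2 codom_f.
have -> : (r i' == u) = false by apply: contraNF uh => /eqP <-.
case: ifP => [eri'u | _]; last by rewrite mul0r.
have ri'_v : r i' != v by rewrite vE (inj_eq rD.1).
by rewrite (minor_neighbour_eq0 D_or uv uh rD cD (esym uE) ri'_v eri'u) !mulr0.
Qed.

Lemma det_heads_tails_loops D k (r c : 'I_k -> 'I_n) kl (rl : 'I_kl -> 'I_n) :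
  oriented D -> enumerates r (heads D) -> enumerates c (tails D) ->
  enumerates rl (loops D) ->
  eqpm (\det (subm (Lmx e) r c)) (\det (subm (Lmx e) rl rl)).
Proof.
have [N] := ubnP #|D|; elim: N D k r c => // N IHN D k r c D_N D_or rD cD rlD.
have [/existsP [[x y] /andP [xy /= x_y]] | /existsPn D_loops] :=
  boolP [exists p in D, p.1 != p.2]; last first.
  have /heads_tails_loops [hD tD] : {in D, forall p, p.1 = p.2}.
    by move=> p pD; apply/eqP; move: (D_loops p); rewrite pD negbK.
  by rewrite hD in rD; rewrite tD in cD; exact: (det_subm_eqpm _ rD cD rlD rlD).
have [u [v [uv uh]]] := oriented_source_arc D_or xy x_y.
have u_v : u != v by apply: contraNneq uh => ->; exact: mem_heads uv.
case: k r c rD cD => [|k] r c rD cD.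
  by have /codomP [[]] : v \in codom r by rewrite rD.2 (mem_heads uv).
have [i [j [vE uE det_eq]]] := det_source_arc D_or uv uh rD cD.
apply: (eqpm_trans det_eq); apply: (IHN (D :\ (u, v))).
- by rewrite (cardsD1 (u, v) D) uv in D_N.
- exact: oriented_subset D_or (subsetDl _ _).
- by rewrite (heads_delete_arc D_or uv) -vE; exact: enumerates_lift.
- by rewrite (tails_delete_arc D_or uv) -uE; exact: enumerates_lift.
- by rewrite loops_delete_arc.
Qed.

Lemma det_orientations_eqpm D1 D k (r c : 'I_k -> 'I_n) k' (r' c' : 'I_k' -> 'I_n) :
  oriented D1 -> is_orientation (undirected D1) D ->
  enumerates r (heads D1) -> enumerates c (tails D1) ->
  enumerates r' (heads D) -> enumerates c' (tails D) ->
  eqpm (\det (subm (Lmx e) r c)) (\det (subm (Lmx e) r' c')).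
Proof.
move=> D1_or D_or rD1 cD1 r'D c'D.
have [kl [rl [_ rlD1]]] := increasing_enumeration (loops D1).
have rlD : enumerates rl (loops D).
  by rewrite (loops_orientation D_or (orientation_undirected D1_or)).
apply: eqpm_trans (det_heads_tails_loops D1_or rD1 cD1 rlD1) _.
have D_oriented := orientation_oriented e_sym D1_or D_or.
exact/eqpm_sym/(det_heads_tails_loops D_oriented r'D c'D rlD).
Qed.

End Trees.

Theorem lemma3p3 (n : nat) (e : rel 'I_n) (f : {mpoly int[n]}) :
  is_tree e -> is_minor e f -> f != 0 -> 0 < mleadc f ->
  exists M : {set {set 'I_n}},
    two_matching e M /\
    (exists D, is_orientation M D) /\
    (forall D, is_orientation M D -> is_d e D f).
Proof.
move=> [e_sym _ _ e_acyclic] [k [r [c [_ r_incr c_incr ->]]]] f_neq0 f_lead.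
have [D1 [D1_or rD1 cD1]] :=
  minor_arcs e_sym (increasing_inj r_incr) (increasing_inj c_incr) f_neq0.
exists (undirected D1); split; first exact: two_matching_undirected.
split; first by exists D1; exact: orientation_undirected D1_or.
move=> D D_or; have D_oriented := orientation_oriented e_sym D1_or D_or.
have [k' [r' [c' [r'_incr c'_incr r'D c'D]]]] := increasing_enumerations D_oriented.
exists k', r', c'; split => // [x | x |]; rewrite ?r'D.2 ?c'D.2 //.
split => //.
exact: (det_orientations_eqpm e_sym e_acyclic D1_or D_or rD1 cD1 r'D c'D).
Qed.
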